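(* Let $n\in\mathbb N$ and let $f$ be extremal for $M_n$ with $f(0)>0$ and $N$ atoms. Let $t=-\log f(0)>0$ and let $h:\mathbb D\to\mathbb D$ be the holomorphic function with $h(0)=0$ such that $f=\exp\big(t\frac{h-1}{h+1}\big)$. Then $h$ is a finite Blaschke product of degree $N$.
   Context: $\mathbb D$ is the open unit disc; $\mathcal B_0=\{f$ holomorphic on $\mathbb D: 0<|f|\le1\}$; $M_n(f)=\mathrm{Re}\,a_n$ for $f=\sum a_jz^j$; $f\in\mathcal B_0$ is extremal for $M_n$ if $M_n(f)\ge M_n(F)$ for all $F\in\mathcal B_0$. It is known that such $f$ with $f(0)>0$ has the form $f(z)=\exp\big(-\sum_{j=1}^N\lambda_j\frac{1+\alpha_jz}{1-\alpha_jz}\big)$ with $1\le N\le n$, $\lambda_j>0$, distinct $\alpha_j\in\partial\mathbb D$ ($N$ = number of atoms). Explicitly $h=\frac{t+\log f}{t-\log f}$ with $\log f$ the branch real at $0$. *)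

From Stdlib Require Import Reals.
From Coquelicot Require Import Coquelicot.
Open Scope C_scope.

Definition Cexp (z : Complex.C) : Complex.C :=
  (exp (Re z) * cos (Im z), exp (Re z) * sin (Im z))%R.

Definition in_disc (z : Complex.C) : Prop := (Cmod z < 1)%R.

Definition holo_on_disc (f : Complex.C -> Complex.C) : Prop :=
  forall z, in_disc z -> ex_derive f z.

Definition B0 (f : Complex.C -> Complex.C) : Prop :=
  holo_on_disc f /\ forall z, in_disc z -> (0 < Cmod (f z) <= 1)%R.

Definition taylor_coefs (f : Complex.C -> Complex.C) (a : nat -> Complex.C) : Prop :=
  forall z, in_disc z -> is_series (fun j => a j * pow_n z j) (f z).

(* f is extremal for M_n(f) = Re a_n *)
Definition extremal (n : nat) (f : Complex.C -> Complex.C) : Prop :=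
  B0 f /\ forall (F : Complex.C -> Complex.C) (a b : nat -> Complex.C),
    B0 F -> taylor_coefs f a -> taylor_coefs F b -> (Re (b n) <= Re (a n))%R.

Fixpoint csum (u : nat -> Complex.C) (N : nat) : Complex.C :=
  match N with O => 0 | S k => csum u k + u k end.
Fixpoint cprod (u : nat -> Complex.C) (N : nat) : Complex.C :=
  match N with O => 1 | S k => cprod u k * u k end.

Definition has_atoms (f : Complex.C -> Complex.C) (N : nat) : Prop :=
  exists (lam : nat -> R) (al : nat -> Complex.C),
    (forall j, (j < N)%nat -> (0 < lam j)%R) /\
    (forall j, (j < N)%nat -> Cmod (al j) = 1%R) /\
    (forall i j, (i < N)%nat -> (j < N)%nat -> al i = al j -> i = j) /\
    (forall z, in_disc z ->
       f z = Cexp (- csum (fun j => RtoC (lam j) * ((1 + al j * z) / (1 - al j * z))) N)).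

Definition blaschke_deg (h : Complex.C -> Complex.C) (N : nat) : Prop :=
  exists (c : Complex.C) (a : nat -> Complex.C),
    Cmod c = 1%R /\ (forall k, (k < N)%nat -> (Cmod (a k) < 1)%R) /\
    (forall z, in_disc z ->
       h z = c * cprod (fun k => (z - a k) / (1 - Cconj (a k) * z)) N).

(* Write [S z = sum_j lam_j (1 + al_j z) / (1 - al_j z)], so that [f = Cexp (- S)] and
   [t = S 0]. Both [t (h - 1) / (h + 1)] and [- S] are continuous logarithms of [f] on the
   disc that agree at [0], hence they coincide and [h = (t - S) / (t + S)]. Clearing the
   denominator [prod_j (1 - al_j z)] gives [h = P / Q] with polynomials [P] and [Q] of
   degree [N]. Since [Re S >= 0] inside the disc and [Re S <= 0] outside, the [N] roots
   [a_k] of [P] lie in the disc; since [|al_j| = 1], [Q] is the reflection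
   [z ^ N * Cconj (P (/ Cconj z))] up to a unimodular factor, so its roots are the
   [/ Cconj a_k]. Hence [h = prod_j (- al_j) * prod_k (z - a_k) / (1 - Cconj a_k * z)]. *)

From Stdlib Require Import Reals Lra Lia Classical.
From Coquelicot Require Import Coquelicot.
From mathcomp Require all_boot all_algebra Rstruct complex.
Open Scope C_scope.
Set Bullet Behavior "Strict Subproofs".

Lemma Cmult_integral (x y : C) : x * y = 0 -> x = 0 \/ y = 0.
Proof.
  intros Hxy. destruct (classic (x = 0)) as [Hx | Hx]; [now left | right].
  replace y with (/ x * (x * y)) by (field; exact Hx). rewrite Hxy. ring.
Qed.

Lemma Cmult_reg_l (c x y : C) : c <> 0 -> c * x = c * y -> x = y.
Proof.
  intros Hc E. replace x with (/ c * (c * x)) by (field; exact Hc).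
  rewrite E. field. exact Hc.
Qed.

Lemma Cconj_RtoC (r : R) : Cconj (RtoC r) = RtoC r.
Proof. unfold Cconj, RtoC; simpl. f_equal; ring. Qed.

Lemma Cconj_neq_0 (z : C) : z <> 0 -> Cconj z <> 0.
Proof. intros Hz E. apply Hz. rewrite <- (Cconj_conj z), E. apply Cconj_RtoC. Qed.

Lemma Cconj_real (x : C) : Im x = 0%R -> Cconj x = x.
Proof. destruct x as [a b]; simpl; intros ->. unfold Cconj; simpl. f_equal; ring. Qed.

Lemma C_real (x : C) : Im x = 0%R -> x = RtoC (Re x).
Proof. destruct x as [a b]; simpl; intros ->. reflexivity. Qed.

Lemma Cconj_unit (a : C) : Cmod a = 1%R -> Cconj a * a = 1.
Proof. intros Ha. rewrite Cmult_comm, <- Cmod2_conj, Ha. unfold RtoC. f_equal; ring. Qed.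

Lemma Cmult_eq_1_inj (a b z : C) : a * z = 1 -> b * z = 1 -> a = b.
Proof.
  intros Ha Hb. transitivity (a * (b * z)); [rewrite Hb; ring|].
  transitivity (b * (a * z)); [ring|]. rewrite Ha. ring.
Qed.

Lemma one_minus_neq_0 (w : C) : (Cmod w < 1)%R -> 1 - w <> 0.
Proof.
  intros Hw E. apply Ceq_minus in E. rewrite <- E, Cmod_1 in Hw. lra.
Qed.

Lemma Cmod_mult_lt_1 (a z : C) : (Cmod a <= 1)%R -> (Cmod z < 1)%R -> (Cmod (a * z) < 1)%R.
Proof.
  intros Ha Hz. rewrite Cmod_mult. pose proof (Cmod_ge_0 a). pose proof (Cmod_ge_0 z). nra.
Qed.

Lemma in_disc_scale (s : R) (z : C) : (0 <= s <= 1)%R -> in_disc z -> in_disc (RtoC s * z).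
Proof.
  unfold in_disc. intros Hs Hz. rewrite Cmod_mult, Cmod_R, Rabs_pos_eq by lra.
  pose proof (Cmod_ge_0 z). nra.
Qed.

Lemma cprod_ext (u v : nat -> C) n :
  (forall j, (j < n)%nat -> u j = v j) -> cprod u n = cprod v n.
Proof.
  induction n as [|n IH]; simpl; intros H; [reflexivity|].
  rewrite IH, (H n) by first [lia | intros; apply H; lia]. reflexivity.
Qed.

Lemma cprod_neq_0 (u : nat -> C) n : (forall j, (j < n)%nat -> u j <> 0) -> cprod u n <> 0.
Proof.
  induction n as [|n IH]; simpl; intros H.
  - exact C1_nz.
  - apply Cmult_neq_0; [apply IH; intros j Hj|]; apply H; lia.
Qed.

Lemma cprod_factor_eq_0 (u : nat -> C) n j : (j < n)%nat -> u j = 0 -> cprod u n = 0.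
Proof.
  induction n as [|n IH]; simpl; intros Hj Hu; [lia|].
  destruct (Nat.eq_dec j n) as [-> | Hne].
  - rewrite Hu. ring.
  - rewrite IH by (lia || exact Hu). ring.
Qed.

Lemma cprod_eq_0 (u : nat -> C) n : cprod u n = 0 -> exists j, (j < n)%nat /\ u j = 0.
Proof.
  intros H. apply NNPP. intros Hno. apply (cprod_neq_0 u n); [|exact H].
  intros j Hj E. apply Hno. now exists j.
Qed.

Lemma cprod_mult (u v : nat -> C) n : cprod (fun j => u j * v j) n = cprod u n * cprod v n.
Proof. induction n as [|n IH]; simpl; [ring|]. rewrite IH. ring. Qed.

Lemma cprod_div (u v : nat -> C) n : (forall j, (j < n)%nat -> v j <> 0) ->
  cprod (fun j => u j / v j) n = cprod u n / cprod v n.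
Proof.
  intros Hv. unfold Cdiv. rewrite cprod_mult. f_equal.
  induction n as [|n IH]; simpl.
  - field.
  - rewrite IH by (intros; apply Hv; lia). field.
    split; [apply Hv; lia | apply cprod_neq_0; intros; apply Hv; lia].
Qed.

Lemma Cconj_cprod (u : nat -> C) n : Cconj (cprod u n) = cprod (fun j => Cconj (u j)) n.
Proof. induction n as [|n IH]; simpl; [apply Cconj_RtoC|]. now rewrite Cmult_conj, IH. Qed.

Lemma Cmod_cprod_1 (u : nat -> C) n :
  (forall j, (j < n)%nat -> Cmod (u j) = 1%R) -> Cmod (cprod u n) = 1%R.
Proof.
  induction n as [|n IH]; simpl; intros H; [apply Cmod_1|].
  rewrite Cmod_mult, IH, (H n) by first [lia | intros; apply H; lia]. ring.
Qed.

Lemma cprod_const (z : C) n : cprod (fun _ => z) n = z ^ n.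
Proof. induction n as [|n IH]; simpl; [reflexivity|]. rewrite IH. ring. Qed.

(* The fundamental theorem of algebra is taken from mathcomp's complex numbers [R[i]]. *)
Module ComplexPoly.
Import all_boot all_algebra.
Import Rstruct complex.
Import GRing.Theory.

Definition to_complex (z : Coquelicot.Complex.C) : R[i] := Complex z.1 z.2.

Definition of_complex (w : R[i]) : C := (complex.Re w, complex.Im w).

Lemma of_complexK : cancel of_complex to_complex.
Proof. by case. Qed.

Lemma to_complex_inj : injective to_complex.
Proof. by case=> a b [c d] [-> ->]. Qed.
Lemma to_complexD x y : to_complex (x + y) = (to_complex x + to_complex y)%R.
Proof. by case: x; case: y. Qed.
Lemma to_complexB x y : to_complex (x - y) = (to_complex x - to_complex y)%R.
Proof. by case: x; case: y. Qed.
Lemma to_complexM x y : to_complex (x * y) = (to_complex x * to_complex y)%R.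
Proof. by case: x; case: y. Qed.

Lemma to_complex_cprod u n : to_complex (cprod u n) = (\prod_(i < n) to_complex (u i))%R.
Proof.
elim: n => [|n IH] /=; first by rewrite big_ord0.
by rewrite to_complexM IH big_ord_recr.
Qed.

Definition is_poly (p : C -> C) (n : nat) (c : C) : Prop :=
  exists q : {poly R[i]}, [/\ (size q <= n.+1)%N, (q`_n)%R = to_complex c
                            & forall z, to_complex (p z) = q.[to_complex z]%R].

Lemma is_poly_ext p p' n c : (forall z, p z = p' z) -> is_poly p n c -> is_poly p' n c.
Proof. by move=> E [q [sq cq Hq]]; exists q; split=> // z; rewrite -E. Qed.

Lemma is_poly_const c : is_poly (fun _ => c) 0 c.
Proof.
by exists (to_complex c)%:P%R; split=> [|| z]; rewrite ?size_polyC ?leq_b1 ?coefC ?hornerC.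
Qed.

Lemma is_poly_linear a b : is_poly (fun z => a + b * z) 1 b.
Proof.
exists ((to_complex a)%:P + to_complex b *: 'X)%R; split.
- rewrite (leq_trans (size_polyD _ _)) // geq_max (leq_trans (size_polyC_leq1 _)) //.
  by rewrite (leq_trans (size_scale_leq _ _)) // size_polyX.
- by rewrite coefD coefC coefZ coefX mulr1 add0r.
- by move=> z; rewrite hornerD hornerC hornerZ hornerX to_complexD to_complexM.
Qed.

Lemma is_poly_add p p' n c c' :
  is_poly p n c -> is_poly p' n c' -> is_poly (fun z => p z + p' z) n (c + c').
Proof.
case=> q [sq cq Hq] [q' [sq' cq' Hq']]; exists (q + q')%R; split.
- by rewrite (leq_trans (size_polyD _ _)) // geq_max sq sq'.
- by rewrite coefD cq cq' to_complexD.
- by move=> z; rewrite hornerD to_complexD Hq Hq'.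
Qed.

Lemma is_poly_sub p p' n c c' :
  is_poly p n c -> is_poly p' n c' -> is_poly (fun z => p z - p' z) n (c - c').
Proof.
case=> q [sq cq Hq] [q' [sq' cq' Hq']]; exists (q - q')%R; split.
- by rewrite (leq_trans (size_polyD _ _)) // size_polyN geq_max sq sq'.
- by rewrite coefB cq cq' to_complexB.
- by move=> z; rewrite hornerD hornerN to_complexB Hq Hq'.
Qed.

Lemma coefM_top (K : nzRingType) (q q' : {poly K}) m n :
  (size q <= m.+1)%N -> (size q' <= n.+1)%N -> ((q * q')`_(m + n) = q`_m * q'`_n)%R.
Proof.
move=> sq sq'; have lt_m : (m < (m + n).+1)%N by rewrite ltnS leq_addr.
rewrite coefM (bigD1 (Ordinal lt_m)) //= addKn big1 ?addr0 // => j /eqP ne_jm.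
have [lt_jm | le_mj] := ltnP j m.
- by rewrite [(q'`_ _)%R]nth_default ?mulr0 // (leq_trans sq') // ltn_subRL ltn_add2r.
- rewrite [(q`_ _)%R]nth_default ?mul0r // (leq_trans sq) // ltn_neqAle le_mj andbT.
  by apply/eqP=> E; apply: ne_jm; apply: val_inj.
Qed.

Lemma is_poly_mul p p' m n c c' :
  is_poly p m c -> is_poly p' n c' -> is_poly (fun z => p z * p' z) (m + n) (c * c').
Proof.
case=> q [sq cq Hq] [q' [sq' cq' Hq']]; exists (q * q')%R; split.
- rewrite (leq_trans (size_polyMleq _ _)) //.
  by rewrite -subn1 leq_subLR (leq_trans (leq_add sq sq')) // addSn addnS.
- by rewrite coefM_top // cq cq' to_complexM.
- by move=> z; rewrite hornerM to_complexM Hq Hq'.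
Qed.

Lemma is_poly_factor p n c : is_poly p n c -> c <> 0 ->
  exists a : nat -> C, forall z, p z = c * cprod (fun k => z - a k) n.
Proof.
case=> q [sq cq Hq] c_neq0.
have cq_neq0 : (q`_n != 0)%R.
  by apply/eqP; rewrite cq => E; apply: c_neq0; apply: to_complex_inj; rewrite E.
have size_q : size q = n.+1.
  by apply/eqP; rewrite eqn_leq sq /=; apply: contraNT cq_neq0; rewrite -leqNgt => /leq_sizeP->.
have [r Hr] := closed_field_poly_normal q.
have lead_q : lead_coef q = (q`_n)%R by rewrite lead_coefE size_q.
have size_r : size r = n.
  by move: size_q; rewrite Hr size_scale ?lead_q // size_prod_XsubC => -[].
exists (fun k => of_complex (nth 0%R r k)) => z; apply: to_complex_inj.
rewrite Hq Hr hornerZ horner_prod lead_q cq to_complexM to_complex_cprod.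
congr (_ * _)%R; rewrite (big_nth 0%R) big_mkord size_r; apply: eq_bigr => i _.
by rewrite hornerXsubC to_complexB of_complexK.
Qed.

End ComplexPoly.
Import ComplexPoly.

Lemma Re_herglotz (w : C) : 1 - w <> 0 ->
  Re ((1 + w) / (1 - w)) = ((1 - Cmod w ^ 2) / Cmod (1 - w) ^ 2)%R.
Proof.
  intros Hw. rewrite !Cmod2_alt.
  assert (Hd : (Re (1 - w) ^ 2 + Im (1 - w) ^ 2)%R <> 0%R).
  { rewrite <- Cmod2_alt. apply pow_nonzero. intros E. now apply Hw, Cmod_eq_0. }
  destruct w as [a b]. unfold Re, Im in *; simpl in *.
  field. lra.
Qed.

Lemma Re_herglotz_nonneg (w : C) : (Cmod w < 1)%R -> (0 <= Re ((1 + w) / (1 - w)))%R.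
Proof.
  intros Hw. rewrite Re_herglotz by now apply one_minus_neq_0.
  apply Rdiv_le_0_compat; [|apply pow_lt, Cmod_gt_0, one_minus_neq_0, Hw].
  pose proof (Cmod_ge_0 w). nra.
Qed.

Lemma Re_herglotz_nonpos (w : C) : (1 <= Cmod w)%R -> 1 - w <> 0 ->
  (Re ((1 + w) / (1 - w)) <= 0)%R.
Proof.
  intros Hw Hw1. rewrite Re_herglotz by exact Hw1.
  unfold Rdiv. apply Rmult_le_0_r; [simpl; nra|].
  apply Rlt_le, Rinv_0_lt_compat, pow_lt, Cmod_gt_0, Hw1.
Qed.

Lemma Re_csum_nonneg (u : nat -> C) n :
  (forall j, (j < n)%nat -> (0 <= Re (u j))%R) -> (0 <= Re (csum u n))%R.
Proof.
  induction n as [|n IH]; intros H; [simpl; lra|].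
  change (Re (csum u (S n))) with (Re (csum u n) + Re (u n))%R.
  pose proof (H n (Nat.lt_succ_diag_r n)).
  assert (0 <= Re (csum u n))%R by (apply IH; intros; apply H; lia). lra.
Qed.

Lemma Re_csum_nonpos (u : nat -> C) n :
  (forall j, (j < n)%nat -> (Re (u j) <= 0)%R) -> (Re (csum u n) <= 0)%R.
Proof.
  induction n as [|n IH]; intros H; [simpl; lra|].
  change (Re (csum u (S n))) with (Re (csum u n) + Re (u n))%R.
  pose proof (H n (Nat.lt_succ_diag_r n)).
  assert (Re (csum u n) <= 0)%R by (apply IH; intros; apply H; lia). lra.
Qed.

Lemma Im_csum_RtoC (r : nat -> R) n : Im (csum (fun j => RtoC (r j)) n) = 0%R.
Proof.
  induction n as [|n IH]; [reflexivity|].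
  change (Im (csum (fun j => RtoC (r j)) n) + 0 = 0)%R. rewrite IH. ring.
Qed.

Lemma reflect_one_minus (a z : C) : Cmod a = 1%R -> z <> 0 ->
  z * Cconj (1 - a * / Cconj z) = - Cconj a * (1 - a * z).
Proof.
  intros Ha Hz.
  rewrite Cminus_conj, Cmult_conj, Cinv_conj, Cconj_conj, Cconj_RtoC by now apply Cconj_neq_0.
  transitivity (z - Cconj a); [field; exact Hz|].
  transitivity (- Cconj a + (Cconj a * a) * z); [|ring].
  rewrite Cconj_unit by exact Ha. ring.
Qed.

Lemma reflect_one_plus (a z : C) : Cmod a = 1%R -> z <> 0 ->
  z * Cconj (1 + a * / Cconj z) = Cconj a * (1 + a * z).
Proof.
  intros Ha Hz.
  rewrite Cplus_conj, Cmult_conj, Cinv_conj, Cconj_conj, Cconj_RtoC by now apply Cconj_neq_0.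
  transitivity (z + Cconj a); [field; exact Hz|].
  transitivity (Cconj a + (Cconj a * a) * z); [|ring].
  rewrite Cconj_unit by exact Ha. ring.
Qed.

Section Atoms.

Variables (lam : nat -> R) (al : nat -> C).

Definition atom_sum (k : nat) (z : C) : C :=
  csum (fun j => RtoC (lam j) * ((1 + al j * z) / (1 - al j * z))) k.

Definition atom_den (k : nat) (z : C) : C := cprod (fun j => 1 - al j * z) k.

Fixpoint atom_num (k : nat) (z : C) : C :=
  match k with
  | O => 0
  | S k => atom_num k z * (1 - al k * z) + RtoC (lam k) * (1 + al k * z) * atom_den k z
  end.

Definition atom_mass (k : nat) : C := csum (fun j => RtoC (lam j)) k.

Lemma atom_den_S k z : atom_den (S k) z = atom_den k z * (1 - al k * z).
Proof. reflexivity. Qed.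

Lemma atom_sum_eq k z : atom_den k z <> 0 -> atom_sum k z = atom_num k z / atom_den k z.
Proof.
  induction k as [|k IH]; intros H.
  - unfold atom_sum, atom_den; simpl. field.
  - rewrite atom_den_S in *.
    assert (Hk : atom_den k z <> 0) by (intros E; apply H; rewrite E; ring).
    assert (Hz : 1 - al k * z <> 0) by (intros E; apply H; rewrite E; ring).
    unfold atom_sum in *; simpl. rewrite IH by exact Hk. field. tauto.
Qed.

Lemma atom_den_0 k : atom_den k 0 = 1.
Proof. unfold atom_den. induction k as [|k IH]; simpl; [reflexivity|]. rewrite IH. ring. Qed.

Lemma atom_num_0 k : atom_num k 0 = atom_mass k.
Proof.
  induction k as [|k IH]; simpl; [reflexivity|].
  rewrite IH, atom_den_0. unfold atom_mass; simpl. ring.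
Qed.

Lemma atom_sum_0 k : atom_sum k 0 = atom_mass k.
Proof. rewrite atom_sum_eq, atom_den_0, atom_num_0; [field | rewrite atom_den_0; exact C1_nz]. Qed.

Lemma Re_atom_mass_nonneg k : (forall j, (j < k)%nat -> (0 < lam j)%R) -> (0 <= Re (atom_mass k))%R.
Proof. intros Hlam. apply Re_csum_nonneg. intros j Hj. rewrite re_RtoC. now apply Rlt_le, Hlam. Qed.

Lemma atom_den_neq_0 k z : (forall j, (j < k)%nat -> Cmod (al j) = 1%R) ->
  (Cmod z < 1)%R -> atom_den k z <> 0.
Proof.
  intros Hal Hz. apply cprod_neq_0. intros j Hj.
  apply one_minus_neq_0, Cmod_mult_lt_1; [rewrite Hal by exact Hj; lra | exact Hz].
Qed.

Lemma Re_atom_sum_nonneg k z : (forall j, (j < k)%nat -> (0 < lam j)%R) ->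
  (forall j, (j < k)%nat -> Cmod (al j) = 1%R) ->
  (Cmod z < 1)%R -> (0 <= Re (atom_sum k z))%R.
Proof.
  intros Hlam Hal Hz. apply Re_csum_nonneg. intros j Hj. rewrite re_scal_l.
  apply Rmult_le_pos; [now apply Rlt_le, Hlam|].
  apply Re_herglotz_nonneg, Cmod_mult_lt_1; [rewrite Hal by exact Hj; lra | exact Hz].
Qed.

Lemma Re_atom_sum_nonpos k z : (forall j, (j < k)%nat -> (0 < lam j)%R) ->
  (forall j, (j < k)%nat -> Cmod (al j) = 1%R) ->
  (1 <= Cmod z)%R -> atom_den k z <> 0 -> (Re (atom_sum k z) <= 0)%R.
Proof.
  intros Hlam Hal Hz Hden. apply Re_csum_nonpos. intros j Hj. rewrite re_scal_l.
  apply Rmult_le_0_l; [now apply Rlt_le, Hlam|].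
  apply Re_herglotz_nonpos.
  - rewrite Cmod_mult, Hal by exact Hj. lra.
  - intros E. apply Hden. exact (cprod_factor_eq_0 _ k j Hj E).
Qed.

Lemma atom_num_at_pole k z : (forall j, (j < k)%nat -> (0 < lam j)%R) ->
  (forall i j, (i < k)%nat -> (j < k)%nat -> al i = al j -> i = j) ->
  atom_den k z = 0 -> atom_num k z <> 0.
Proof.
  induction k as [|k IH]; intros Hlam Hinj Hden.
  - exfalso. exact (C1_nz Hden).
  - rewrite atom_den_S in Hden. simpl.
    assert (Hlam_k : RtoC (lam k) <> 0).
    { intros E. apply RtoC_inj in E. specialize (Hlam k (Nat.lt_succ_diag_r k)). lra. }
    destruct (classic (1 - al k * z = 0)) as [Hk | Hk].
    + assert (Hprev : atom_den k z <> 0).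
      { intros E. destruct (cprod_eq_0 _ _ E) as [j [Hj Ej]].
        apply Ceq_minus in Ej, Hk.
        assert (j = k)
          by (apply Hinj; [lia | lia | exact (Cmult_eq_1_inj _ _ _ (eq_sym Ej) (eq_sym Hk))]).
        lia. }
      rewrite Hk, Cmult_0_r, Cplus_0_l.
      apply Ceq_minus in Hk. rewrite <- Hk.
      repeat apply Cmult_neq_0; try assumption.
      intros E. injection E. lra.
    + destruct (Cmult_integral _ _ Hden) as [Hprev | Hk']; [|contradiction].
      rewrite Hprev, Cmult_0_r, Cplus_0_r.
      apply Cmult_neq_0; [|exact Hk].
      apply IH; [intros; apply Hlam; lia | intros i j Hi Hj; apply Hinj; lia | exact Hprev].
Qed.

Lemma atom_den_poly k : is_poly (atom_den k) k (cprod (fun j => - al j) k).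
Proof.
  induction k as [|k IH]; [exact (is_poly_const 1)|].
  apply (is_poly_ext (fun z => (1 + - al k * z) * atom_den k z));
    [intros z; rewrite atom_den_S; ring|].
  replace (cprod (fun j => - al j) (S k)) with (- al k * cprod (fun j => - al j) k)
    by (simpl; ring).
  exact (is_poly_mul _ _ 1 k _ _ (is_poly_linear 1 (- al k)) IH).
Qed.

Lemma atom_num_poly k : is_poly (atom_num k) k (- atom_mass k * cprod (fun j => - al j) k).
Proof.
  induction k as [|k IH].
  - replace (- atom_mass 0 * cprod (fun j => - al j) 0) with (RtoC 0)
      by (unfold atom_mass; simpl; ring).
    exact (is_poly_const 0).
  - apply (is_poly_ext (fun z => (1 + - al k * z) * atom_num k z
                               + (RtoC (lam k) + RtoC (lam k) * al k * z) * atom_den k z));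
      [intros z; simpl; ring|].
    replace (- atom_mass (S k) * cprod (fun j => - al j) (S k))
      with (- al k * (- atom_mass k * cprod (fun j => - al j) k)
            + RtoC (lam k) * al k * cprod (fun j => - al j) k)
      by (unfold atom_mass; simpl; ring).
    apply is_poly_add.
    + exact (is_poly_mul _ _ 1 k _ _ (is_poly_linear 1 (- al k)) IH).
    + exact (is_poly_mul _ _ 1 k _ _ (is_poly_linear _ _) (atom_den_poly k)).
Qed.

Definition atom_sign (k : nat) : C := cprod (fun j => - Cconj (al j)) k.

Lemma atom_den_reflect k (z : C) : (forall j, (j < k)%nat -> Cmod (al j) = 1%R) -> z <> 0 ->
  z ^ k * Cconj (atom_den k (/ Cconj z)) = atom_sign k * atom_den k z.
Proof.
  intros Hal Hz. unfold atom_den, atom_sign.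
  rewrite Cconj_cprod, <- cprod_const, <- !cprod_mult.
  apply cprod_ext. intros j Hj. apply reflect_one_minus; [apply Hal, Hj | exact Hz].
Qed.

Lemma atom_num_reflect k (z : C) : (forall j, (j < k)%nat -> Cmod (al j) = 1%R) -> z <> 0 ->
  z ^ k * Cconj (atom_num k (/ Cconj z)) = - atom_sign k * atom_num k z.
Proof.
  intros Hal Hz. induction k as [|k IH]; simpl.
  - rewrite Cconj_RtoC. ring.
  - rewrite Cplus_conj, !Cmult_conj, Cconj_RtoC.
    transitivity ((z ^ k * Cconj (atom_num k (/ Cconj z))) * (z * Cconj (1 - al k * / Cconj z))
      + RtoC (lam k) * (z * Cconj (1 + al k * / Cconj z))
        * (z ^ k * Cconj (atom_den k (/ Cconj z)))); [ring|].
    rewrite IH, atom_den_reflect, reflect_one_minus, reflect_one_plus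
      by (try exact Hz; intros; apply Hal; lia).
    unfold atom_sign; simpl. ring.
Qed.

End Atoms.

Section Cayley.

Variables (lam : nat -> R) (al : nat -> C) (N : nat) (t : R).
Hypothesis lam_pos : forall j, (j < N)%nat -> (0 < lam j)%R.
Hypothesis al_unit : forall j, (j < N)%nat -> Cmod (al j) = 1%R.
Hypothesis al_inj : forall i j, (i < N)%nat -> (j < N)%nat -> al i = al j -> i = j.
Hypothesis t_pos : (0 < t)%R.

Let den := atom_den al N.
Let num := atom_num lam al N.
Let mass := atom_mass lam N.
Let P z := RtoC t * den z - num z.
Let Q z := RtoC t * den z + num z.

Lemma cayley_mass_neq_0 : RtoC t + mass <> 0.
Proof.
  intros E. pose proof (Re_atom_mass_nonneg lam N lam_pos) as Hmass. fold mass in Hmass.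
  assert (Hre : Re (RtoC t + mass) = 0%R) by (rewrite E; reflexivity).
  change (t + Re mass = 0)%R in Hre. lra.
Qed.

(* Outside the disc [Re (atom_sum z) <= 0 < t], and at a pole [num] does not vanish. *)
Lemma cayley_num_root_in_disc z : P z = 0 -> (Cmod z < 1)%R.
Proof.
  unfold P. intros Hroot. apply Rnot_le_lt. intros Hz. apply Ceq_minus in Hroot.
  destruct (classic (den z = 0)) as [Hden | Hden].
  - apply (atom_num_at_pole lam al N z lam_pos al_inj Hden).
    fold num. rewrite <- Hroot, Hden. ring.
  - pose proof (Re_atom_sum_nonpos lam al N z lam_pos al_unit Hz Hden) as Hre.
    rewrite atom_sum_eq in Hre by exact Hden. fold den num in Hre. rewrite <- Hroot in Hre.
    replace (RtoC t * den z / den z) with (RtoC t) in Hre by (field; exact Hden).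
    rewrite re_RtoC in Hre. lra.
Qed.

Lemma cayley_num_factor : exists a : nat -> C,
  (forall k, (k < N)%nat -> (Cmod (a k) < 1)%R) /\
  forall z, P z = (RtoC t + mass) * cprod (fun j => - al j) N * cprod (fun k => z - a k) N.
Proof.
  assert (Hpoly : is_poly P N ((RtoC t + mass) * cprod (fun j => - al j) N)).
  { replace ((RtoC t + mass) * cprod (fun j => - al j) N)
      with (RtoC t * cprod (fun j => - al j) N - (- mass * cprod (fun j => - al j) N)) by ring.
    apply is_poly_sub; [|apply atom_num_poly].
    exact (is_poly_mul _ _ 0 N _ _ (is_poly_const _) (atom_den_poly al N)). }
  destruct (is_poly_factor _ _ _ Hpoly) as [a Ha].
  { apply Cmult_neq_0; [exact cayley_mass_neq_0|].
    apply cprod_neq_0. intros j Hj E. apply (f_equal Cmod) in E.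
    rewrite Cmod_opp, al_unit, Cmod_0 in E by exact Hj. lra. }
  exists a. split; [|intros z; rewrite Ha; ring].
  intros k Hk. apply cayley_num_root_in_disc.
  rewrite Ha, (cprod_factor_eq_0 (fun j => a k - a j) N k Hk); ring.
Qed.

(* Reflection in the unit circle: [z ^ N * Cconj (P (/ Cconj z)) = atom_sign al N * Q z]
   since [|al j| = 1], so the roots of [Q] are the reflections of those of [P]. *)
Lemma cayley_den_factor (a : nat -> C) :
  (forall z, P z = (RtoC t + mass) * cprod (fun j => - al j) N * cprod (fun k => z - a k) N) ->
  forall z, Q z = (RtoC t + mass) * cprod (fun k => 1 - Cconj (a k) * z) N.
Proof.
  intros Hfac z. unfold Q. destruct (classic (z = 0)) as [-> | Hz].
  - unfold den, num. rewrite atom_den_0, atom_num_0. fold mass.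
    rewrite (cprod_ext _ (fun _ => 1)), cprod_const, Cpow_1_l by (intros; ring). ring.
  - assert (Hsign : atom_sign al N <> 0).
    { apply cprod_neq_0. intros j Hj E. apply (f_equal Cmod) in E.
      rewrite Cmod_opp, Cmod_conj, al_unit, Cmod_0 in E by exact Hj. lra. }
    apply (Cmult_reg_l (atom_sign al N)); [exact Hsign|].
    set (w := / Cconj z).
    assert (Hreflect : z ^ N * Cconj (P w) = atom_sign al N * (RtoC t * den z + num z)).
    { unfold P. rewrite Cminus_conj, Cmult_conj, Cconj_RtoC.
      transitivity (RtoC t * (z ^ N * Cconj (den w)) - z ^ N * Cconj (num w)); [ring|].
      unfold den, num, w. rewrite atom_den_reflect, atom_num_reflect by assumption. ring. }
    rewrite <- Hreflect, Hfac, !Cmult_conj, Cconj_cprod, Cconj_cprod.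
    rewrite Cplus_conj, Cconj_RtoC, (Cconj_real mass) by apply Im_csum_RtoC.
    rewrite <- cprod_const.
    transitivity ((RtoC t + mass) * cprod (fun j => Cconj (- al j)) N
                  * cprod (fun j => z * Cconj (w - a j)) N); [rewrite cprod_mult; ring|].
    unfold atom_sign. rewrite (cprod_ext (fun j => Cconj (- al j)) (fun j => - Cconj (al j)))
      by (intros; apply Copp_conj).
    rewrite (cprod_ext (fun j => z * Cconj (w - a j)) (fun k => 1 - Cconj (a k) * z)); [ring|].
    intros j _. unfold w. rewrite Cminus_conj, Cinv_conj, Cconj_conj by now apply Cconj_neq_0.
    field. exact Hz.
Qed.

Lemma cayley_atom_sum_blaschke :
  blaschke_deg (fun z => (RtoC t - atom_sum lam al N z) / (RtoC t + atom_sum lam al N z)) N.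
Proof.
  destruct cayley_num_factor as [a [Ha HP]].
  pose proof (cayley_den_factor a HP) as HQ.
  exists (cprod (fun j => - al j) N), a. split; [|split; [exact Ha|]].
  - apply Cmod_cprod_1. intros j Hj. rewrite Cmod_opp. exact (al_unit j Hj).
  - intros z Hz.
    assert (Hden : den z <> 0) by exact (atom_den_neq_0 al N z al_unit Hz).
    assert (Hfactors : forall k, (k < N)%nat -> 1 - Cconj (a k) * z <> 0).
    { intros k Hk. apply one_minus_neq_0, Cmod_mult_lt_1; [|exact Hz].
      rewrite Cmod_conj. exact (Rlt_le _ _ (Ha k Hk)). }
    assert (HQ0 : Q z <> 0).
    { rewrite HQ. apply Cmult_neq_0; [exact cayley_mass_neq_0 | exact (cprod_neq_0 _ N Hfactors)]. }
    rewrite atom_sum_eq by exact Hden. fold den num.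
    transitivity (P z / Q z); [unfold P, Q in *; field; tauto|].
    rewrite HP, HQ, cprod_div by exact Hfactors.
    field. split; [exact (cprod_neq_0 _ N Hfactors) | exact cayley_mass_neq_0].
Qed.

End Cayley.

Lemma continuous_C_pair {U : UniformSpace} (f g : U -> R) (x : U) :
  continuous f x -> continuous g x -> continuous (fun y => (f y, g y) : C) x.
Proof.
  intros Hf Hg P [eps HP]. change (locally x (fun y => P (f y, g y))).
  apply (filter_imp (fun y => ball (f x) eps (f y) /\ ball (g x) eps (g y))).
  - intros y [H1 H2]. apply HP. split; assumption.
  - apply filter_and; [apply Hf | apply Hg]; apply locally_ball.
Qed.

Lemma continuous_Re (x : C) : continuous Re x.
Proof. destruct x. apply continuous_fst. Qed.

Lemma continuous_Im (x : C) : continuous Im x.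
Proof. destruct x. apply continuous_snd. Qed.

Lemma continuous_Cinv (x : C) : x <> 0 -> continuous Cinv x.
Proof.
  intros Hx.
  assert (Hd : (Re x ^ 2 + Im x ^ 2)%R <> 0%R).
  { rewrite <- Cmod2_alt. apply pow_nonzero. intros E. now apply Hx, Cmod_eq_0. }
  assert (Hcd : continuous (fun z : C => (Re z ^ 2 + Im z ^ 2)%R) x).
  { apply (continuous_plus (fun z : C => (Re z ^ 2)%R) (fun z : C => (Im z ^ 2)%R)); simpl;
    apply (continuous_mult (K := R_AbsRing)); try apply continuous_Re; try apply continuous_Im;
    apply (continuous_mult (K := R_AbsRing)); try apply continuous_Re; try apply continuous_Im;
    apply continuous_const. }
  pose proof (continuous_comp _ Rinv x Hcd (continuous_Rinv _ Hd)) as Hinv.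
  apply continuous_C_pair; apply (continuous_mult (K := R_AbsRing)); try exact Hinv.
  - apply continuous_Re.
  - apply (continuous_opp (V := R_NormedModule)), continuous_Im.
Qed.

Lemma continuous_of_ex_derive (h : C -> C) (x : C) : ex_derive h x -> continuous h x.
Proof.
  intros Hh P HP. destruct (ex_derive_continuous h x Hh P HP) as [eps Heps].
  assert (Hpos : (0 < eps / sqrt 2)%R).
  { apply Rdiv_lt_0_compat; [apply cond_pos | apply sqrt_lt_R0; lra]. }
  exists (mkposreal _ Hpos). intros y Hy. apply Heps.
  pose proof (C_NormedModule_mixin_compat2 x y (mkposreal _ Hpos) Hy) as Hy'. simpl in Hy'.
  change (Cmod (minus y x) < eps)%R.
  replace (pos eps) with (sqrt 2 * (eps / sqrt 2))%R; [exact Hy'|].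
  field. apply Rgt_not_eq, sqrt_lt_R0. lra.
Qed.

Lemma continuous_Cplus {U : UniformSpace} (f g : U -> C) (x : U) :
  continuous f x -> continuous g x -> continuous (fun y => f y + g y) x.
Proof. exact (continuous_plus (V := C_NormedModule) f g x). Qed.

Lemma continuous_Cminus {U : UniformSpace} (f g : U -> C) (x : U) :
  continuous f x -> continuous g x -> continuous (fun y => f y - g y) x.
Proof. exact (continuous_minus (V := C_NormedModule) f g x). Qed.

Lemma continuous_Cmult {U : UniformSpace} (f g : U -> C) (x : U) :
  continuous f x -> continuous g x -> continuous (fun y => f y * g y) x.
Proof.
  intros Hf Hg.
  assert (HRe : forall h : U -> C, continuous h x -> continuous (fun y => Re (h y)) x)
    by (intros h Hh; exact (continuous_comp h Re x Hh (continuous_Re _))).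
  assert (HIm : forall h : U -> C, continuous h x -> continuous (fun y => Im (h y)) x)
    by (intros h Hh; exact (continuous_comp h Im x Hh (continuous_Im _))).
  apply continuous_C_pair;
    [apply (continuous_minus (V := R_NormedModule))
    | apply (continuous_plus (V := R_NormedModule))];
    apply (continuous_mult (K := R_AbsRing)); auto.
Qed.

Lemma continuous_Cdiv {U : UniformSpace} (f g : U -> C) (x : U) :
  continuous f x -> continuous g x -> g x <> 0 -> continuous (fun y => f y / g y) x.
Proof.
  intros Hf Hg Hgx. apply continuous_Cmult; [exact Hf|].
  exact (continuous_comp g Cinv x Hg (continuous_Cinv _ Hgx)).
Qed.

Lemma continuous_RtoC (s : R) : continuous RtoC s.
Proof. apply continuous_C_pair; [apply continuous_id | apply continuous_const]. Qed.

Lemma continuous_atom_sum lam al k z : (forall j, (j < k)%nat -> 1 - al j * z <> 0) ->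
  continuous (atom_sum lam al k) z.
Proof.
  induction k as [|k IH]; intros Hz; [apply continuous_const|].
  apply continuous_Cplus; [apply IH; intros; apply Hz; lia|].
  apply continuous_Cmult; [apply continuous_const|].
  apply continuous_Cdiv; [| | apply Hz; lia];
    [apply continuous_Cplus | apply continuous_Cminus]; try apply continuous_const;
    apply continuous_Cmult; try apply continuous_const; apply continuous_id.
Qed.

Lemma Cexp_add (a b : C) : Cexp (a + b) = Cexp a * Cexp b.
Proof.
  destruct a as [a1 a2], b as [b1 b2]. unfold Cexp, Cplus, Cmult; simpl.
  rewrite exp_plus, cos_plus, sin_plus. f_equal; ring.
Qed.

Lemma Cexp_RtoC (r : R) : Cexp (RtoC r) = RtoC (exp r).
Proof. unfold Cexp; simpl. rewrite cos_0, sin_0. unfold RtoC. f_equal; ring. Qed.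

Lemma Cexp_eq_1 (w : C) : Cexp w = 1 -> Re w = 0%R /\ cos (Im w) = 1%R.
Proof.
  destruct w as [a b]. unfold Cexp, Re, Im; simpl. intros E. injection E as E1 E2.
  pose proof (exp_pos a). pose proof (sin2_cos2 b). unfold Rsqr in *.
  assert (sin b = 0%R) by nra. assert (Hcos : cos b = 1%R) by nra.
  split; [|exact Hcos]. rewrite Hcos, Rmult_1_r in E1. rewrite <- (ln_exp a), E1. apply ln_1.
Qed.

Lemma cos_eq_1_path_nonpos (phi : R -> R) :
  (forall s, (0 <= s <= 1)%R -> continuous phi s) -> phi 0%R = 0%R ->
  (forall s, (0 <= s <= 1)%R -> cos (phi s) = 1%R) -> (phi 1%R <= 0)%R.
Proof.
  intros Hc H0 Hcos. apply Rnot_lt_le. intros Hpos. pose proof PI_RGT_0.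
  destruct (Rle_or_lt (phi 1%R) PI) as [Hle | Hlt].
  - assert (cos (phi 1%R) < cos 0)%R by (apply cos_decreasing_1; lra).
    rewrite cos_0, Hcos in H1 by lra. lra.
  - destruct (Ranalysis5.IVT_interv (fun s => phi s - PI)%R 0 1) as [s [Hs Es]];
      [| lra | lra | lra |].
    + intros s Hs. apply continuity_pt_minus; [|apply continuity_pt_const; intros ? ?; reflexivity].
      apply continuity_pt_filterlim, Hc, Hs.
    + specialize (Hcos s Hs). replace (phi s) with PI in Hcos by lra. rewrite cos_PI in Hcos. lra.
Qed.

(* Only the multiples of [2 PI] have cosine [1], so a continuous [phi] starting at [0]
   stays there. *)
Lemma cos_eq_1_path (phi : R -> R) :
  (forall s, (0 <= s <= 1)%R -> continuous phi s) -> phi 0%R = 0%R ->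
  (forall s, (0 <= s <= 1)%R -> cos (phi s) = 1%R) -> phi 1%R = 0%R.
Proof.
  intros Hc H0 Hcos. apply Rle_antisym; [exact (cos_eq_1_path_nonpos phi Hc H0 Hcos)|].
  assert (Hneg : (- phi 1%R <= 0)%R).
  { apply (cos_eq_1_path_nonpos (fun s => - phi s)%R).
    - intros s Hs. apply (continuous_opp (V := R_NormedModule)), Hc, Hs.
    - rewrite H0. ring.
    - intros s Hs. rewrite cos_neg. apply Hcos, Hs. }
  lra.
Qed.

Lemma Cexp_path_eq_1 (g : R -> C) :
  (forall s, (0 <= s <= 1)%R -> continuous g s) -> g 0%R = 0 ->
  (forall s, (0 <= s <= 1)%R -> Cexp (g s) = 1) -> g 1%R = 0.
Proof.
  intros Hc H0 Hexp.
  assert (Hs1 : (0 <= 1 <= 1)%R) by lra.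
  rewrite (C_real (g 1%R)); [rewrite (proj1 (Cexp_eq_1 _ (Hexp 1%R Hs1))); reflexivity|].
  apply (cos_eq_1_path (fun s => Im (g s))).
  - intros s Hs. exact (continuous_comp g Im s (Hc s Hs) (continuous_Im _)).
  - rewrite H0. reflexivity.
  - intros s Hs. exact (proj2 (Cexp_eq_1 _ (Hexp s Hs))).
Qed.

(* [G] below is continuous, vanishes at [0] and satisfies [Cexp G = 1], so it vanishes along
   the segment from [0] to [z]. *)
Lemma eq_cayley_of_Cexp_eq (t : R) (h S : C -> C) : (0 < t)%R ->
  (forall z, in_disc z -> continuous h z) -> (forall z, in_disc z -> continuous S z) ->
  (forall z, in_disc z -> in_disc (h z)) -> (forall z, in_disc z -> (0 <= Re (S z))%R) ->
  h 0 = 0 -> S 0 = RtoC t ->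
  (forall z, in_disc z -> Cexp (RtoC t * ((h z - 1) / (h z + 1))) = Cexp (- S z)) ->
  forall z, in_disc z -> h z = (RtoC t - S z) / (RtoC t + S z).
Proof.
  intros Ht Hh HS Hmap HreS Hh0 HS0 Hexp z Hz.
  assert (Hh1 : forall x, in_disc x -> h x + 1 <> 0).
  { intros x Hx E. specialize (Hmap x Hx). unfold in_disc in Hmap.
    replace (h x) with (- (1)) in Hmap
      by (replace (h x) with (h x + 1 - 1) by ring; rewrite E; ring).
    rewrite Cmod_opp, Cmod_1 in Hmap. lra. }
  set (G := fun x => RtoC t * ((h x - 1) / (h x + 1)) + S x).
  assert (HG : G (RtoC 1 * z) = 0).
  { apply (Cexp_path_eq_1 (fun s => G (RtoC s * z))).
    - intros s Hs. apply (continuous_comp (fun s => RtoC s * z) G).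
      + apply continuous_Cmult; [apply continuous_RtoC | apply continuous_const].
      + assert (Hsz := in_disc_scale s z Hs Hz).
        apply continuous_Cplus; [|apply HS, Hsz].
        apply continuous_Cmult; [apply continuous_const|].
        apply continuous_Cdiv; [| | apply Hh1, Hsz];
          [apply continuous_Cminus | apply continuous_Cplus];
          try apply continuous_const; apply Hh, Hsz.
    - cbv beta. unfold G. rewrite Cmult_0_l, Hh0, HS0. field.
    - intros s Hs. cbv beta. unfold G. rewrite Cexp_add, Hexp by (apply in_disc_scale; assumption).
      rewrite <- Cexp_add.
      replace (- S (RtoC s * z) + S (RtoC s * z)) with (RtoC 0) by ring.
      rewrite Cexp_RtoC, exp_0. reflexivity. }
  rewrite Cmult_1_l in HG.
  assert (Hsum : RtoC t + S z <> 0).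
  { intros E. pose proof (HreS z Hz).
    assert (Hre : Re (RtoC t + S z) = 0%R) by (rewrite E; reflexivity).
    change (t + Re (S z) = 0)%R in Hre. lra. }
  transitivity ((RtoC t + S z) * h z / (RtoC t + S z)); [field; exact Hsum|].
  f_equal. apply Ceq_minus.
  transitivity ((h z + 1) * G z); [unfold G; field; exact (Hh1 z Hz)|].
  rewrite HG. ring.
Qed.

Lemma atom_mass_from_value_at_0 (lam : nat -> R) (al : nat -> C) N (f : C -> C) (t : R) :
  (forall z, in_disc z -> f z = Cexp (- atom_sum lam al N z)) ->
  t = (- ln (Re (f 0)))%R -> RtoC t = atom_mass lam N.
Proof.
  intros Hf Ht. rewrite Hf, atom_sum_0 in Ht by (unfold in_disc; rewrite Cmod_0; lra).
  rewrite (C_real (atom_mass lam N)) in Ht |- * by apply Im_csum_RtoC.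
  rewrite <- RtoC_opp, Cexp_RtoC, re_RtoC, ln_exp in Ht. rewrite Ht. f_equal. ring.
Qed.

Lemma blaschke_deg_ext (g h : C -> C) N :
  (forall z, in_disc z -> g z = h z) -> blaschke_deg g N -> blaschke_deg h N.
Proof.
  intros Hgh [c [a [Hc [Ha Hg]]]]. exists c, a. split; [exact Hc|]. split; [exact Ha|].
  intros z Hz. rewrite <- Hgh by exact Hz. exact (Hg z Hz).
Qed.

Theorem lemma5 (n N : nat) (f h : Complex.C -> Complex.C) (t : R) :
  extremal n f ->
  Im (f 0) = 0%R -> (0 < Re (f 0))%R ->
  has_atoms f N ->
  t = (- ln (Re (f 0)))%R -> (0 < t)%R ->
  holo_on_disc h -> (forall z, in_disc z -> in_disc (h z)) -> h 0 = 0 ->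
  (forall z, in_disc z -> f z = Cexp (RtoC t * ((h z - 1) / (h z + 1)))) ->
  blaschke_deg h N.
Proof.
  intros _ _ _ [lam [al [Hlam [Hal [Hinj Hf]]]]] Ht Htpos Hhol Hmap Hh0 Hfh.
  change (forall z, in_disc z -> f z = Cexp (- atom_sum lam al N z)) in Hf.
  assert (Hmass := atom_mass_from_value_at_0 lam al N f t Hf Ht).
  apply (blaschke_deg_ext
           (fun z => (RtoC t - atom_sum lam al N z) / (RtoC t + atom_sum lam al N z))).
  - symmetry. apply (eq_cayley_of_Cexp_eq t h (atom_sum lam al N)); try assumption.
    + intros x Hx. exact (continuous_of_ex_derive h x (Hhol x Hx)).
    + intros x Hx. apply continuous_atom_sum. intros j Hj.
      apply one_minus_neq_0, Cmod_mult_lt_1; [rewrite Hal by exact Hj; lra | exact Hx].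
    + intros x Hx. exact (Re_atom_sum_nonneg lam al N x Hlam Hal Hx).
    + rewrite atom_sum_0. now symmetry.
    + intros x Hx. rewrite <- Hfh, Hf by exact Hx. reflexivity.
  - exact (cayley_atom_sum_blaschke lam al N t Hlam Hal Hinj Htpos).
Qed.
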